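(* Let $\alpha\in\mathbb{R}$ be fixed, let $\mathbf{u},\mathbf{v}$ satisfy the standing assumptions below, and let $h\in C_c^1(\mathbb{D})$. Then $h$ can be recovered (in particular, is uniquely determined) from $\mathcal{V}_\alpha h$.
   Context: $\mathbb{D}$ is the open unit disc in $\mathbb{R}^2$; $C_c^1(\mathbb{D})$ denotes $C^1$ functions with compact support in $\mathbb{D}$. Standing assumptions: $\mathbf{u},\mathbf{v}$ are $C^1$ vector fields on $\mathbb{R}^2$ with $|\mathbf{u}|=|\mathbf{v}|=1$, linearly independent at every point, whose integral curves are straight lines ($\mathbf{u}(\mathbf{x}+t\mathbf{u}(\mathbf{x}))=\mathbf{u}(\mathbf{x})$, $\mathbf{v}(\mathbf{x}+t\mathbf{v}(\mathbf{x}))=\mathbf{v}(\mathbf{x})$ for $t\ge0$). The weighted V-line transform is $\mathcal{V}_\alpha h(\mathbf{x})=\int_0^\infty h(\mathbf{x}+t\mathbf{u}(\mathbf{x}))\,dt+\alpha\int_0^\infty h(\mathbf{x}+t\mathbf{v}(\mathbf{x}))\,dt$. *)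

From Stdlib Require Import Reals.
From Coquelicot Require Import Coquelicot.
Open Scope R_scope.

Definition pt := (R * R)%type.
Definition padd (p q : pt) : pt := (fst p + fst q, snd p + snd q).
Definition pscal (t : R) (p : pt) : pt := (t * fst p, t * snd p).
Definition pnorm2 (p : pt) : R := fst p ^ 2 + snd p ^ 2.

Definition C1 (f : pt -> R) : Prop :=
  exists fx fy : pt -> R,
    (forall p : pt, is_derive (fun s => f (s, snd p)) (fst p) (fx p)) /\
    (forall p : pt, is_derive (fun s => f (fst p, s)) (snd p) (fy p)) /\
    (forall p : pt, continuous fx p) /\
    (forall p : pt, continuous fy p).

Definition C1_field (w : pt -> pt) : Prop :=
  C1 (fun p => fst (w p)) /\ C1 (fun p => snd (w p)).

(* h in C_c^1(D): C^1 on R^2 with compact support inside the open unit disc,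
   i.e. h vanishes outside some closed disc of radius r < 1. *)
Definition Cc1_disc (h : pt -> R) : Prop :=
  C1 h /\ exists r : R, 0 <= r < 1 /\
    forall p : pt, pnorm2 p > r ^ 2 -> h p = 0.

Definition straight_field (w : pt -> pt) : Prop :=
  forall (x : pt) (t : R), 0 <= t -> w (padd x (pscal t (w x))) = w x.

Definition standing_assumptions (u v : pt -> pt) : Prop :=
  C1_field u /\ C1_field v /\
  (forall x, pnorm2 (u x) = 1) /\ (forall x, pnorm2 (v x) = 1) /\
  (forall x, fst (u x) * snd (v x) - snd (u x) * fst (v x) <> 0) /\
  straight_field u /\ straight_field v.

Definition ray_int (h : pt -> R) (x w : pt) : R :=
  RInt_gen (fun t => h (padd x (pscal t w))) (at_point 0) (Rbar_locally p_infty).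

Definition Valpha (alpha : R) (u v : pt -> pt) (h : pt -> R) (x : pt) : R :=
  ray_int h x (u x) + alpha * ray_int h x (v x).

From Pilot Require Import Defs.
From Stdlib Require Import Reals Lra Psatz Classical_Prop.
From Coquelicot Require Import Coquelicot.
Open Scope R_scope.

(* A straight C^1 field of unit vectors is constant.  Forward rays are given; the
   Lipschitz bound turns "w is constant along forward rays" into "w is constant
   along backward rays" as well, so w is constant along whole lines.  Two
   non-parallel lines meet, hence any two values of w are parallel, and by
   continuity they are equal.

   So u = a and v = b are constant and independent.  In the coordinates
   x = s a + t b, a function h vanishing outside the disc has
     V_alpha h (s a + t b) = A(s,t) + alpha B(s,t),
   A(s,t) = int_s^K H(x,t) dx,  B(s,t) = int_t^K H(s,y) dy,  H(s,t) = h(s a + t b).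
   If this vanishes identically, then d_s A = d_t B = -H and A = -alpha B give
   (alpha d_s + d_t) B = 0: B is constant along the characteristics
   (s + alpha tau, t + tau), and it vanishes where they reach t = K, so B = 0.
   Then A = 0, and differentiating A in s gives H = 0. *)

Lemma Rmult_lt_of_lt_div (a b c : R) : 0 < c -> a < b / c -> a * c < b.
Proof. intros Hc H. replace b with (b / c * c) by (field; lra). now apply Rmult_lt_compat_r. Qed.

Lemma Rabs_sub_le_derive_bound (g dg : R -> R) (a b B : R) :
  (forall s, is_derive g s (dg s)) ->
  (forall s, Rabs (s - a) <= Rabs (b - a) -> Rabs (dg s) <= B) ->
  Rabs (g b - g a) <= B * Rabs (b - a).
Proof.
  intros Hd HB.
  destruct (MVT_gen g a b dg) as [c [Hc E]].
  - intros x _; apply Hd.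
  - intros x _. apply derivable_continuous_pt. exists (dg x). apply is_derive_Reals, Hd.
  - rewrite E, Rabs_mult. apply Rmult_le_compat_r; [apply Rabs_pos|].
    apply HB. unfold Rmin, Rmax in Hc. destruct (Rle_dec a b); split_Rabs; lra.
Qed.

Lemma real_induction (P : R -> Prop) :
  P 0 ->
  (forall m, 0 < m -> (forall s, 0 <= s < m -> P s) -> P m) ->
  (forall m, 0 <= m -> P m -> exists e, 0 < e /\ forall s, m < s <= m + e -> P s) ->
  forall s, 0 <= s -> P s.
Proof.
  intros P0 Pclosed Popen s1 Hs1.
  destruct (classic (P s1)) as [|Hn]; [assumption|exfalso].
  set (E := fun s => 0 <= s /\ forall r, 0 <= r <= s -> P r).
  assert (E_bound : forall s, E s -> s < s1).
  { intros s [_ Hs]. destruct (Rlt_le_dec s s1); [assumption|].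
    exfalso; apply Hn, Hs; lra. }
  destruct (completeness E) as [m [Hub Hlub]].
  - exists s1. intros s Hs. now apply Rlt_le, E_bound.
  - exists 0. split; [lra|]. intros r Hr. now replace r with 0 by lra.
  assert (Hm0 : 0 <= m) by (apply Hub; split; [lra|]; intros r Hr; now replace r with 0 by lra).
  assert (below : forall r, 0 <= r < m -> P r).
  { intros r Hr. destruct (classic (exists s, E s /\ r < s)) as [[s [[_ Hs] Hrs]]|Hno].
    - apply Hs; lra.
    - exfalso. assert (m <= r); [|lra]. apply Hlub. intros s Hs.
      destruct (Rle_lt_dec s r); [assumption|]. exfalso; eauto. }
  assert (Pm : P m).
  { destruct (Req_dec m 0) as [->|]; [assumption|]. apply Pclosed; [lra|assumption]. }
  destruct (Popen m Hm0 Pm) as [e [He above]].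
  assert (HE : E (m + e)).
  { split; [lra|]. intros r Hr.
    destruct (Rlt_le_dec r m); [apply below; lra|].
    destruct (Req_dec r m) as [->|]; [assumption|]. apply above; lra. }
  specialize (Hub _ HE). lra.
Qed.

Lemma continuity_pt_left_const (f : R -> R) (a m c : R) :
  a < m -> continuity_pt f m -> (forall s, a < s < m -> f s = c) -> f m = c.
Proof.
  intros Ham Hc Hconst. apply cond_eq. intros e He.
  destruct (Hc e He) as [d [Hd Hball]].
  set (s := m - Rmin d (m - a) / 2).
  pose proof (Rmin_l d (m - a)); pose proof (Rmin_r d (m - a)).
  assert (0 < Rmin d (m - a)) by (apply Rmin_pos; lra).
  rewrite <- (Hconst s), Rabs_minus_sym by (unfold s; lra).
  apply (Hball s). split; [split; [constructor|unfold s; lra]|].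
  simpl; unfold R_dist, s. rewrite Rabs_left; lra.
Qed.

Lemma ex_RInt_continuity (f : R -> R) (a b : R) :
  (forall x, continuity_pt f x) -> ex_RInt f a b.
Proof.
  intros Hc. apply (@ex_RInt_continuous R_CompleteNormedModule).
  intros z _. now apply continuity_pt_filterlim.
Qed.

Lemma RInt_minus_R (f g : R -> R) (a b : R) : ex_RInt f a b -> ex_RInt g a b ->
  RInt (fun x => f x - g x) a b = RInt f a b - RInt g a b.
Proof. exact (RInt_minus f g a b). Qed.

Lemma RInt_Chasles_tail (f : R -> R) (x y K : R) : (forall z, continuity_pt f z) ->
  RInt f y K - RInt f x K = - RInt f x y.
Proof.
  intros Hc. rewrite <- (RInt_Chasles f x y K) by now apply ex_RInt_continuity.
  unfold plus; simpl; ring.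
Qed.

Lemma RInt_sub_const_bound (f : R -> R) (a b c e : R) : (forall x, continuity_pt f x) ->
  (forall x, Rmin a b <= x <= Rmax a b -> Rabs (f x - c) <= e) ->
  Rabs (RInt f a b - (b - a) * c) <= Rabs (b - a) * e.
Proof.
  intros Hc Hb.
  assert (Hcc : forall x, continuity_pt (fun _ => c) x)
    by (intros; apply continuity_pt_const; intros ? ?; reflexivity).
  replace (RInt f a b - (b - a) * c) with (RInt (fun x => f x - c) a b).
  - apply (norm_RInt_le_const_abs (fun x => f x - c) a b); [assumption|].
    apply (@RInt_correct R_CompleteNormedModule), ex_RInt_continuity.
    intros x. now apply continuity_pt_minus.
  - rewrite (RInt_minus_R f (fun _ => c)), RInt_const by now apply ex_RInt_continuity.
    reflexivity.
Qed.

Lemma RInt_gen_shift_support (f F : R -> R) (K s : R) :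
  (forall x, continuity_pt f x) -> (forall x, K <= x -> f x = 0) ->
  (forall t, F t = f (s + t)) ->
  RInt_gen F (at_point 0) (Rbar_locally p_infty) = RInt f s K.
Proof.
  intros Hc HK HF. apply is_RInt_gen_unique.
  intros P HP. exists (fun a => a = 0) (fun b => Rmax 0 (K - s) < b).
  - reflexivity.
  - now exists (Rmax 0 (K - s)).
  - intros a b -> Hb. simpl. exists (RInt f s K). split; [|now apply locally_singleton].
    pose proof (Rmax_r 0 (K - s)).
    assert (HcF : forall x, continuity_pt F x).
    { intros x. apply (continuity_pt_ext (fun t => f (s + t))); [intros; now rewrite HF|].
      apply (continuity_pt_comp (fun t => s + t) f); [|apply Hc].
      apply continuity_pt_plus; [|apply continuity_pt_id].
      apply continuity_pt_const; intros ? ?; reflexivity. }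
    replace (RInt f s K) with (RInt F 0 b).
    { apply (@RInt_correct R_CompleteNormedModule), ex_RInt_continuity, HcF. }
    transitivity (RInt f s (s + b)).
    + transitivity (RInt f (1 * 0 + s) (1 * b + s)); [|f_equal; ring].
      rewrite <- RInt_comp_lin by now apply ex_RInt_continuity.
      apply RInt_ext. intros x _. rewrite HF. unfold scal; simpl; unfold mult; simpl.
      rewrite Rmult_1_l. f_equal; ring.
    + rewrite <- (RInt_Chasles f s K (s + b)) by now apply ex_RInt_continuity.
      rewrite (RInt_ext f (fun _ => 0) K (s + b)), RInt_const
        by (intros x Hx; apply HK; unfold Rmin, Rmax in Hx; destruct (Rle_dec K (s + b)); lra).
      unfold plus, scal; simpl; unfold mult; simpl. ring.
Qed.

Lemma RInt_tail_eq0 (f : R -> R) (K : R) : (forall x, continuity_pt f x) ->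
  (forall s, RInt f s K = 0) -> forall s, f s = 0.
Proof.
  intros Hc Hz s.
  assert (Hd : is_derive (fun a => RInt f a K) s (- f s)).
  { apply (is_derive_RInt' f (fun a => RInt f a K) s K).
    - apply filter_forall. intros a.
      apply (@RInt_correct R_CompleteNormedModule), ex_RInt_continuity, Hc.
    - now apply continuity_pt_filterlim. }
  assert (Hd0 : is_derive (fun a => RInt f a K) s 0).
  { apply (is_derive_ext (fun _ => 0)); [intros; now rewrite Hz|].
    apply (is_derive_const (K := R_AbsRing) (V := R_NormedModule) 0). }
  apply is_derive_unique in Hd. apply is_derive_unique in Hd0. lra.
Qed.

Lemma derivable_pt_lim_0_of_quadratic_increments (G : R -> R) (t0 : R) :
  (exists C d, 0 < d /\ forall t, Rabs t < d -> Rabs (G (t0 + t) - G t0) <= C * t ^ 2) ->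
  derivable_pt_lim G t0 0.
Proof.
  intros [C [d [Hd B]]] e He.
  pose proof (Rabs_pos C); pose proof (Rle_abs C).
  assert (Hpos : 0 < Rmin d (e / (Rabs C + 1))) by (apply Rmin_pos; [|apply Rdiv_lt_0_compat]; lra).
  exists (mkposreal _ Hpos); simpl. intros h Hh0 Hh.
  pose proof (Rmin_l d (e / (Rabs C + 1))); pose proof (Rmin_r d (e / (Rabs C + 1))).
  assert (Hha : 0 < Rabs h) by now apply Rabs_pos_lt.
  assert (Hsmall : Rabs h * (Rabs C + 1) < e) by (apply Rmult_lt_of_lt_div; lra).
  specialize (B h ltac:(lra)).
  replace (h ^ 2) with (Rabs h * Rabs h) in B by (rewrite <- Rabs_mult, Rabs_right; nra).
  rewrite Rminus_0_r. unfold Rdiv. rewrite Rabs_mult, Rabs_inv.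
  apply (Rmult_lt_reg_r (Rabs h)); [assumption|].
  rewrite Rmult_assoc, Rinv_l, Rmult_1_r by lra. nra.
Qed.

Lemma constant_of_derivable_pt_lim_0 (G : R -> R) :
  (forall t, derivable_pt_lim G t 0) -> forall t, G t = G 0.
Proof.
  intros Hd t. destruct (MVT_gen G 0 t (fun _ => 0)) as [c [_ Hc]].
  - intros x _. apply is_derive_Reals, Hd.
  - intros x _. apply derivable_continuous_pt. exists 0; apply Hd.
  - lra.
Qed.

Definition pdot (p q : pt) : R := fst p * fst q + snd p * snd q.
Definition pdet (p q : pt) : R := fst p * snd q - snd p * fst q.
Definition l1dist (p q : pt) : R := Rabs (fst q - fst p) + Rabs (snd q - snd p).

Definition lincomb (a b q : pt) : pt := padd (pscal (fst q) a) (pscal (snd q) b).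

Ltac pt_ring := apply injective_projections; unfold padd, pscal; simpl; ring.

Lemma lagrange_identity (e f : pt) :
  pdot e f ^ 2 + pdet e f ^ 2 = pnorm2 e * pnorm2 f.
Proof. unfold pdot, pdet, pnorm2; ring. Qed.

Lemma unit_eq_of_pdot_eq1 (e f : pt) :
  pnorm2 e = 1 -> pnorm2 f = 1 -> pdot e f = 1 -> e = f.
Proof.
  unfold pnorm2, pdot; intros He Hf Hd.
  assert (Hz : (fst e - fst f) ^ 2 + (snd e - snd f) ^ 2 = 0) by nra.
  pose proof (pow2_ge_0 (fst e - fst f)); pose proof (pow2_ge_0 (snd e - snd f)).
  apply injective_projections; nra.
Qed.

Lemma unit_coord_bound (e : pt) : pnorm2 e = 1 -> Rabs (fst e) <= 1 /\ Rabs (snd e) <= 1.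
Proof. unfold pnorm2; intros H. split; split_Rabs; nra. Qed.

Lemma l1dist_line (x d : pt) (t s : R) :
  l1dist (padd x (pscal t d)) (padd x (pscal s d)) = Rabs (s - t) * (Rabs (fst d) + Rabs (snd d)).
Proof.
  unfold l1dist, padd, pscal; simpl.
  replace (fst x + s * fst d - (fst x + t * fst d)) with ((s - t) * fst d) by ring.
  replace (snd x + s * snd d - (snd x + t * snd d)) with ((s - t) * snd d) by ring.
  rewrite !Rabs_mult; ring.
Qed.

Lemma l1dist_lincomb (a b q q' : pt) :
  l1dist (lincomb a b q) (lincomb a b q') <=
  (Rabs (fst a) + Rabs (snd a) + Rabs (fst b) + Rabs (snd b)) * l1dist q q'.
Proof.
  unfold l1dist, lincomb, padd, pscal; simpl.
  replace (fst q' * fst a + snd q' * fst b - (fst q * fst a + snd q * fst b))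
    with ((fst q' - fst q) * fst a + (snd q' - snd q) * fst b) by ring.
  replace (fst q' * snd a + snd q' * snd b - (fst q * snd a + snd q * snd b))
    with ((fst q' - fst q) * snd a + (snd q' - snd q) * snd b) by ring.
  pose proof (Rabs_triang ((fst q' - fst q) * fst a) ((snd q' - snd q) * fst b)).
  pose proof (Rabs_triang ((fst q' - fst q) * snd a) ((snd q' - snd q) * snd b)).
  rewrite !Rabs_mult in *.
  pose proof (Rabs_pos (fst a)); pose proof (Rabs_pos (snd a));
  pose proof (Rabs_pos (fst b)); pose proof (Rabs_pos (snd b));
  pose proof (Rabs_pos (fst q' - fst q)); pose proof (Rabs_pos (snd q' - snd q)).
  nra.
Qed.

Definition lipschitz_at (f : pt -> R) (p : pt) : Prop :=
  exists M rho, 0 < rho /\ 0 <= M /\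
    forall y, l1dist p y < rho -> Rabs (f y - f p) <= M * l1dist p y.

Lemma continuous_pt_box (f : pt -> R) (p : pt) : continuous f p ->
  forall e, 0 < e -> exists d, 0 < d /\ forall z,
    Rabs (fst z - fst p) < d -> Rabs (snd z - snd p) < d -> Rabs (f z - f p) < e.
Proof.
  intros Hc e He.
  destruct (proj1 (filterlim_locally f (f p)) Hc (mkposreal e He)) as [d Hd].
  exists d; split; [apply cond_pos|]. intros z H1 H2. now apply Hd.
Qed.

Lemma C1_lipschitz_at (f : pt -> R) (p : pt) : Defs.C1 f -> lipschitz_at f p.
Proof.
  intros [fx [fy [Hx [Hy [Cx Cy]]]]].
  destruct (continuous_pt_box fx p (Cx p) 1 Rlt_0_1) as [d1 [Hd1 B1]].
  destruct (continuous_pt_box fy p (Cy p) 1 Rlt_0_1) as [d2 [Hd2 B2]].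
  exists (Rabs (fx p) + Rabs (fy p) + 2), (Rmin d1 d2).
  pose proof (Rmin_l d1 d2); pose proof (Rmin_r d1 d2).
  pose proof (Rabs_pos (fx p)); pose proof (Rabs_pos (fy p)).
  split; [now apply Rmin_pos|split; [lra|]].
  destruct p as [p1 p2]; intros [y1 y2]; unfold l1dist; simpl in *; intros Hy12.
  pose proof (Rabs_pos (y1 - p1)); pose proof (Rabs_pos (y2 - p2)).
  assert (E1 : Rabs (f (y1, y2) - f (p1, y2)) <= (Rabs (fx (p1, p2)) + 1) * Rabs (y1 - p1)).
  { apply (Rabs_sub_le_derive_bound (fun s => f (s, y2)) (fun s => fx (s, y2))).
    - intros s. apply (Hx (s, y2)).
    - intros s Hs. assert (Rabs (fx (s, y2) - fx (p1, p2)) < 1) by (apply B1; simpl; lra).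
      split_Rabs; lra. }
  assert (E2 : Rabs (f (p1, y2) - f (p1, p2)) <= (Rabs (fy (p1, p2)) + 1) * Rabs (y2 - p2)).
  { apply (Rabs_sub_le_derive_bound (fun s => f (p1, s)) (fun s => fy (p1, s))).
    - intros s. apply (Hy (p1, s)).
    - intros s Hs. assert (Rabs (fy (p1, s) - fy (p1, p2)) < 1)
        by (apply B2; simpl; split_Rabs; lra).
      split_Rabs; lra. }
  replace (f (y1, y2) - f (p1, p2))
    with ((f (y1, y2) - f (p1, y2)) + (f (p1, y2) - f (p1, p2))) by ring.
  eapply Rle_trans; [apply Rabs_triang|]. nra.
Qed.

Lemma lipschitz_at_minus (f g : pt -> R) (p : pt) :
  lipschitz_at f p -> lipschitz_at g p -> lipschitz_at (fun q => f q - g q) p.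
Proof.
  intros [M1 [r1 [Hr1 [HM1 B1]]]] [M2 [r2 [Hr2 [HM2 B2]]]].
  exists (M1 + M2), (Rmin r1 r2).
  pose proof (Rmin_l r1 r2); pose proof (Rmin_r r1 r2).
  split; [now apply Rmin_pos|split; [lra|]].
  intros y Hy. specialize (B1 y ltac:(lra)). specialize (B2 y ltac:(lra)).
  replace (f y - g y - (f p - g p)) with ((f y - f p) - (g y - g p)) by ring.
  eapply Rle_trans; [apply Rabs_triang|]. rewrite Rabs_Ropp. lra.
Qed.

Lemma lipschitz_at_line_continuity_pt (f : pt -> R) (x d : pt) (t : R) :
  lipschitz_at f (padd x (pscal t d)) -> continuity_pt (fun s => f (padd x (pscal s d))) t.
Proof.
  intros [M [rho [Hr [HM B]]]] e He.
  set (C := Rabs (fst d) + Rabs (snd d)).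
  assert (HC : 0 <= C)
    by (unfold C; pose proof (Rabs_pos (fst d)); pose proof (Rabs_pos (snd d)); lra).
  exists (Rmin (rho / (C + 1)) (e / (M * C + 1))).
  split; [apply Rmin_pos; apply Rdiv_lt_0_compat; nra|].
  intros s [_ Hs]; simpl in *; unfold R_dist in *.
  pose proof (Rmin_l (rho / (C + 1)) (e / (M * C + 1))) as H1.
  pose proof (Rmin_r (rho / (C + 1)) (e / (M * C + 1))) as H2.
  pose proof (Rabs_pos (s - t)).
  assert (Ht : Rabs (s - t) * (C + 1) < rho) by (apply Rmult_lt_of_lt_div; lra).
  assert (Ht' : Rabs (s - t) * (M * C + 1) < e) by (apply Rmult_lt_of_lt_div; nra).
  specialize (B (padd x (pscal s d))). rewrite l1dist_line in B. fold C in B.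
  eapply Rle_lt_trans; [apply B; nra|]. nra.
Qed.

Lemma lipschitz_continuity_pt_l (f : pt -> R) (t : R) : (forall p, lipschitz_at f p) ->
  forall x, continuity_pt (fun x => f (x, t)) x.
Proof.
  intros f_lip x. apply (continuity_pt_ext (fun x => f (padd (0, t) (pscal x (1, 0))))).
  - intros z. f_equal. pt_ring.
  - apply lipschitz_at_line_continuity_pt, f_lip.
Qed.

Lemma lipschitz_continuity_pt_r (f : pt -> R) (s : R) : (forall p, lipschitz_at f p) ->
  forall y, continuity_pt (fun y => f (s, y)) y.
Proof.
  intros f_lip y. apply (continuity_pt_ext (fun y => f (padd (s, 0) (pscal y (0, 1))))).
  - intros z. f_equal. pt_ring.
  - apply lipschitz_at_line_continuity_pt, f_lip.
Qed.

Lemma lipschitz_at_comp_lincomb (f : pt -> R) (a b q : pt) :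
  lipschitz_at f (lincomb a b q) -> lipschitz_at (fun q => f (lincomb a b q)) q.
Proof.
  intros [M [rho [Hr [HM B]]]].
  set (C := Rabs (fst a) + Rabs (snd a) + Rabs (fst b) + Rabs (snd b) + 1).
  assert (HC : 1 <= C) by (unfold C; pose proof (Rabs_pos (fst a)); pose proof (Rabs_pos (snd a));
    pose proof (Rabs_pos (fst b)); pose proof (Rabs_pos (snd b)); lra).
  exists (M * C), (rho / C).
  split; [apply Rdiv_lt_0_compat; lra|split; [nra|]].
  intros y Hy.
  assert (Hd : l1dist (lincomb a b q) (lincomb a b y) <= C * l1dist q y)
    by (eapply Rle_trans; [apply l1dist_lincomb|]; apply Rmult_le_compat_r;
        [unfold l1dist; pose proof (Rabs_pos (fst y - fst q));
         pose proof (Rabs_pos (snd y - snd q)); lra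
        |unfold C; lra]).
  assert (l1dist q y * C < rho) by (apply Rmult_lt_of_lt_div; lra).
  eapply Rle_trans; [apply B; lra|].
  rewrite Rmult_assoc. now apply Rmult_le_compat_l.
Qed.

Section StraightUnitField.

Variable w : pt -> pt.
Hypothesis w1_lip : forall p, lipschitz_at (fun q => fst (w q)) p.
Hypothesis w2_lip : forall p, lipschitz_at (fun q => snd (w q)) p.
Hypothesis w_unit : forall x, pnorm2 (w x) = 1.
Hypothesis w_straight : straight_field w.

(* If q := p - eps w(p), the forward ray from q through q + eps w(q) brings w(q)
   back near p; the Lipschitz bound then makes |w(q) - w(p)| <= eps M |w(q) - w(p)|. *)
Lemma straight_backward_local (p : pt) : exists e0, 0 < e0 /\
  forall eps, 0 <= eps <= e0 -> w (padd p (pscal (- eps) (w p))) = w p.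
Proof.
  destruct (w1_lip p) as [M1 [r1 [Hr1 [HM1 B1]]]].
  destruct (w2_lip p) as [M2 [r2 [Hr2 [HM2 B2]]]].
  pose proof (Rmin_l r1 r2); pose proof (Rmin_r r1 r2).
  set (r := Rmin r1 r2) in *.
  assert (0 < r) by (now apply Rmin_pos).
  exists (Rmin (r / 8) (/ (2 * (M1 + M2 + 1)))).
  split; [apply Rmin_pos; [lra|apply Rinv_0_lt_compat; lra]|].
  intros eps [He0 He1].
  assert (eps <= r / 8) by (eapply Rle_trans; [apply He1|apply Rmin_l]).
  assert (Heps : (M1 + M2) * eps <= / 2).
  { assert (eps <= / (2 * (M1 + M2 + 1))) by (eapply Rle_trans; [apply He1|apply Rmin_r]).
    assert ((M1 + M2 + 1) * / (2 * (M1 + M2 + 1)) = / 2) by (field; lra).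
    nra. }
  set (q := padd p (pscal (- eps) (w p))).
  set (y := padd q (pscal eps (w q))).
  assert (Sy : w y = w q) by (apply w_straight; lra).
  set (d1 := fst (w q) - fst (w p)). set (d2 := snd (w q) - snd (w p)).
  assert (Hdist : l1dist p y = eps * (Rabs d1 + Rabs d2)).
  { unfold l1dist.
    replace (fst y - fst p) with (eps * d1) by (unfold y, d1, q, padd, pscal; simpl; ring).
    replace (snd y - snd p) with (eps * d2) by (unfold y, d2, q, padd, pscal; simpl; ring).
    rewrite !Rabs_mult, (Rabs_right eps) by lra. ring. }
  destruct (unit_coord_bound _ (w_unit p)) as [U1 U2].
  destruct (unit_coord_bound _ (w_unit q)) as [V1 V2].
  assert (Rabs d1 <= 2) by (unfold d1; split_Rabs; lra).
  assert (Rabs d2 <= 2) by (unfold d2; split_Rabs; lra).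
  pose proof (Rabs_pos d1); pose proof (Rabs_pos d2).
  assert (l1dist p y < r) by (rewrite Hdist; nra).
  specialize (B1 y ltac:(lra)); specialize (B2 y ltac:(lra)).
  rewrite Sy, Hdist in B1, B2. fold d1 in B1. fold d2 in B2.
  assert (Rabs d1 + Rabs d2 = 0) by nra.
  assert (d1 = 0) by (apply Rabs_eq_0; lra). assert (d2 = 0) by (apply Rabs_eq_0; lra).
  apply injective_projections; unfold d1, d2 in *; lra.
Qed.

Lemma straight_backward (x : pt) (s : R) :
  0 <= s -> w (padd x (pscal (- s) (w x))) = w x.
Proof.
  set (e := w x).
  apply (real_induction (fun s => w (padd x (pscal (- s) e)) = e)).
  - replace (padd x (pscal (- 0) e)) with x by pt_ring. reflexivity.
  - intros m Hm below.
    assert (Hline : forall r, padd x (pscal r (pscal (-1) e)) = padd x (pscal (- r) e))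
      by (intros; pt_ring).
    assert (component : forall c : pt -> R, (forall p, lipschitz_at (fun q => c (w q)) p) ->
              c (w (padd x (pscal (- m) e))) = c e).
    { intros c Hc.
      apply (continuity_pt_left_const (fun r => c (w (padd x (pscal (- r) e)))) 0 m); [lra| |].
      - eapply continuity_pt_ext; [intros r; rewrite <- Hline; reflexivity|].
        apply (lipschitz_at_line_continuity_pt (fun q => c (w q))), Hc.
      - intros r Hr. now rewrite below by lra. }
    apply injective_projections; now apply component.
  - intros m _ Pm.
    destruct (straight_backward_local (padd x (pscal (- m) e))) as [e0 [He0 Hloc]].
    rewrite Pm in Hloc. exists e0. split; [assumption|]. intros r Hr.
    replace (padd x (pscal (- r) e)) with (padd (padd x (pscal (- m) e)) (pscal (- (r - m)) e))
      by pt_ring.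
    apply Hloc; lra.
Qed.

Lemma straight_line (x : pt) (s : R) : w (padd x (pscal s (w x))) = w x.
Proof.
  destruct (Rle_lt_dec 0 s).
  - now apply w_straight.
  - replace s with (- (- s)) by ring. apply straight_backward; lra.
Qed.

(* Two non-parallel lines meet, and the field is constant along each. *)
Lemma straight_pdet_eq0 (x y : pt) : pdet (w x) (w y) = 0.
Proof.
  set (e := w x). set (f := w y).
  destruct (Req_dec (pdet e f) 0) as [|HD]; [assumption|exfalso].
  set (s := ((fst y - fst x) * snd f - fst f * (snd y - snd x)) / pdet e f).
  set (r := (fst e * (snd y - snd x) - snd e * (fst y - fst x)) / (- pdet e f)).
  assert (Hz : padd x (pscal s e) = padd y (pscal r f))
    by (apply injective_projections; unfold padd, pscal, s, r, pdet in *; simpl; field; lra).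
  assert (Hef : e = f).
  { unfold e at 1. rewrite <- (straight_line x s). fold e. rewrite Hz. apply straight_line. }
  apply HD. rewrite Hef. unfold pdet; ring.
Qed.

Lemma straight_unit_field_constant (x y : pt) : w y = w x.
Proof.
  set (d := (fst y - fst x, snd y - snd x)).
  set (g := fun t => pdot (w (padd x (pscal t d))) (w x)).
  assert (Hg2 : forall t, g t * g t = 1).
  { intros t. unfold g. pose proof (lagrange_identity (w (padd x (pscal t d))) (w x)) as L.
    rewrite (straight_pdet_eq0 (padd x (pscal t d)) x), !w_unit in L. nra. }
  assert (Hcont : continuity g).
  { intros t. unfold g, pdot.
    apply continuity_pt_plus; apply continuity_pt_mult.
    - apply (lipschitz_at_line_continuity_pt (fun q => fst (w q))), w1_lip.
    - apply continuity_pt_const; intros ? ?; reflexivity.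
    - apply (lipschitz_at_line_continuity_pt (fun q => snd (w q))), w2_lip.
    - apply continuity_pt_const; intros ? ?; reflexivity. }
  assert (G0 : g 0 = 1).
  { unfold g. replace (padd x (pscal 0 d)) with x by pt_ring.
    pose proof (w_unit x). unfold pnorm2, pdot in *. lra. }
  assert (G1 : g 1 = 1).
  { destruct (Rlt_le_dec (g 1) 0).
    - exfalso. destruct (IVT_gen g 0 1 0 Hcont) as [z [_ Hz]].
      + rewrite G0. unfold Rmin, Rmax. destruct (Rle_dec 1 (g 1)); lra.
      + specialize (Hg2 z). rewrite Hz in Hg2. lra.
    - specialize (Hg2 1). nra. }
  unfold g in G1. replace (padd x (pscal 1 d)) with y in G1 by (unfold d; pt_ring).
  apply unit_eq_of_pdot_eq1; auto.
Qed.

End StraightUnitField.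

Section TransportEquation.

Variables (H : pt -> R) (K alpha : R).
Hypothesis H_lip : forall p, lipschitz_at H p.
Hypothesis H_transport : forall s t,
  RInt (fun x => H (x, t)) s K + alpha * RInt (fun y => H (s, y)) t K = 0.

Let B s t := RInt (fun y => H (s, y)) t K.

Lemma B_increment (s u d : R) : alpha <> 0 ->
  B (s + alpha * d) (u + d) - B s u =
  - RInt (fun y => H (s + alpha * d, y)) u (u + d)
  + RInt (fun x => H (x, u)) s (s + alpha * d) / alpha.
Proof.
  intros Hal. unfold B.
  pose proof (RInt_Chasles_tail _ u (u + d) K (lipschitz_continuity_pt_r H (s + alpha * d) H_lip)).
  pose proof (RInt_Chasles_tail _ s (s + alpha * d) K (lipschitz_continuity_pt_l H u H_lip)).
  pose proof (H_transport (s + alpha * d) u). pose proof (H_transport s u).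
  apply (Rmult_eq_reg_l alpha); [|assumption].
  field_simplify; [|assumption]. nra.
Qed.

Lemma B_increment_quadratic (s u : R) : alpha <> 0 -> exists C d, 0 < d /\
  forall t, Rabs t < d -> Rabs (B (s + alpha * t) (u + t) - B s u) <= C * t ^ 2.
Proof.
  intros Hal. destruct (H_lip (s, u)) as [M [rho [Hr [HM Hlip]]]].
  pose proof (Rabs_pos alpha).
  exists (M * (2 * Rabs alpha + 1)), (rho / (Rabs alpha + 1)).
  split; [apply Rdiv_lt_0_compat; lra|]. intros t Ht.
  pose proof (Rabs_pos t).
  assert (Hsmall : Rabs t * (Rabs alpha + 1) < rho) by (apply Rmult_lt_of_lt_div; lra).
  set (c := H (s, u)).
  assert (I1 : Rabs (RInt (fun y => H (s + alpha * t, y)) u (u + t) - (u + t - u) * c)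
               <= Rabs (u + t - u) * (M * ((Rabs alpha + 1) * Rabs t))).
  { apply RInt_sub_const_bound; [intros; now apply lipschitz_continuity_pt_r|]. intros y Hy.
    assert (Rabs (y - u) <= Rabs t)
      by (unfold Rmin, Rmax in Hy; destruct (Rle_dec u (u + t)); split_Rabs; lra).
    assert (Hd : l1dist (s, u) (s + alpha * t, y) <= (Rabs alpha + 1) * Rabs t).
    { unfold l1dist; simpl. replace (s + alpha * t - s) with (alpha * t) by ring.
      rewrite Rabs_mult. nra. }
    eapply Rle_trans; [apply Hlip; lra|]. now apply Rmult_le_compat_l. }
  assert (I2 : Rabs (RInt (fun x => H (x, u)) s (s + alpha * t) - (s + alpha * t - s) * c)
               <= Rabs (s + alpha * t - s) * (M * (Rabs alpha * Rabs t))).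
  { apply RInt_sub_const_bound; [intros; now apply lipschitz_continuity_pt_l|]. intros x Hx.
    assert (Rabs (x - s) <= Rabs alpha * Rabs t).
    { rewrite <- Rabs_mult. unfold Rmin, Rmax in Hx.
      destruct (Rle_dec s (s + alpha * t)); split_Rabs; lra. }
    assert (Hd : l1dist (s, u) (x, u) <= Rabs alpha * Rabs t)
      by (unfold l1dist; simpl; rewrite Rminus_diag, Rabs_R0; lra).
    eapply Rle_trans; [apply Hlip; nra|]. now apply Rmult_le_compat_l. }
  replace (u + t - u) with t in I1 by ring.
  replace (s + alpha * t - s) with (alpha * t) in I2 by ring.
  rewrite B_increment by assumption.
  set (J1 := RInt (fun y => H (s + alpha * t, y)) u (u + t)) in *.
  set (J2 := RInt (fun x => H (x, u)) s (s + alpha * t)) in *.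
  assert (I2' : Rabs (J2 / alpha - t * c) <= M * Rabs alpha * (Rabs t * Rabs t)).
  { replace (J2 / alpha - t * c) with ((J2 - alpha * t * c) / alpha) by (field; lra).
    unfold Rdiv. rewrite Rabs_mult, Rabs_inv.
    assert (0 < Rabs alpha) by now apply Rabs_pos_lt.
    apply (Rmult_le_reg_r (Rabs alpha)); [assumption|].
    rewrite Rmult_assoc, Rinv_l, Rmult_1_r by lra.
    rewrite Rabs_mult in I2. nra. }
  replace (- J1 + J2 / alpha) with (- (J1 - t * c) + (J2 / alpha - t * c)) by ring.
  replace (t ^ 2) with (Rabs t * Rabs t) by (rewrite <- Rabs_mult, Rabs_right; nra).
  eapply Rle_trans; [apply Rabs_triang|]. rewrite Rabs_Ropp, Rabs_mult in *. nra.
Qed.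

Lemma B_const_along_characteristics (s t tau : R) : alpha <> 0 ->
  B (s + alpha * tau) (t + tau) = B s t.
Proof.
  intros Hal.
  set (G := fun tau => B (s + alpha * tau) (t + tau)).
  replace (B s t) with (G 0) by (unfold G; f_equal; ring).
  apply (constant_of_derivable_pt_lim_0 G). intros tau0.
  apply derivable_pt_lim_0_of_quadratic_increments.
  destruct (B_increment_quadratic (s + alpha * tau0) (t + tau0) Hal) as [C [d [Hd HB]]].
  exists C, d. split; [assumption|]. intros h Hh. unfold G.
  replace (s + alpha * (tau0 + h)) with (s + alpha * tau0 + alpha * h) by ring.
  replace (t + (tau0 + h)) with (t + tau0 + h) by ring.
  now apply HB.
Qed.

Lemma B_eq0 (s t : R) : alpha <> 0 -> B s t = 0.
Proof.
  intros Hal. rewrite <- (B_const_along_characteristics s t (K - t) Hal).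
  unfold B. replace (t + (K - t)) with K by ring. apply (@RInt_point R_CompleteNormedModule).
Qed.

Lemma transport_solution_eq0 (s t : R) : H (s, t) = 0.
Proof.
  assert (A0 : forall s t, RInt (fun x => H (x, t)) s K = 0).
  { intros s' t'. pose proof (H_transport s' t') as Ht.
    destruct (Req_dec alpha 0) as [Hal|Hal].
    - rewrite Hal in Ht. lra.
    - pose proof (B_eq0 s' t' Hal) as HB. unfold B in HB. rewrite HB in Ht. lra. }
  apply (RInt_tail_eq0 (fun x => H (x, t)) K (lipschitz_continuity_pt_l H t H_lip)).
  intros; apply A0.
Qed.

End TransportEquation.

Section UnitCoordinates.

Variables a b : pt.
Hypothesis a_unit : pnorm2 a = 1.
Hypothesis b_unit : pnorm2 b = 1.
Hypothesis ab_indep : pdet a b <> 0.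

Lemma lincomb_surjective (p : pt) : exists q, lincomb a b q = p.
Proof.
  exists ((fst p * snd b - snd p * fst b) / pdet a b, (fst a * snd p - snd a * fst p) / pdet a b).
  apply injective_projections; unfold lincomb, padd, pscal, pdet in *; simpl; field; assumption.
Qed.

Lemma lincomb_far_outside (r : R) : exists K, forall s t,
  K <= s \/ K <= t -> pnorm2 (lincomb a b (s, t)) > r ^ 2.
Proof.
  set (D := Rabs (pdet a b)).
  assert (HD : 0 < D) by now apply Rabs_pos_lt.
  exists ((Rabs r + 1) / D). intros s t Hst.
  assert (Hs : (s * pdet a b) ^ 2 <= pnorm2 (lincomb a b (s, t))).
  { pose proof (lagrange_identity (lincomb a b (s, t)) b) as L. rewrite b_unit in L.
    replace (pdet (lincomb a b (s, t)) b) with (s * pdet a b) in L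
      by (unfold pdet, lincomb, padd, pscal; simpl; ring).
    pose proof (pow2_ge_0 (pdot (lincomb a b (s, t)) b)). lra. }
  assert (Ht : (t * pdet a b) ^ 2 <= pnorm2 (lincomb a b (s, t))).
  { pose proof (lagrange_identity a (lincomb a b (s, t))) as L. rewrite a_unit in L.
    replace (pdet a (lincomb a b (s, t))) with (t * pdet a b) in L
      by (unfold pdet, lincomb, padd, pscal; simpl; ring).
    pose proof (pow2_ge_0 (pdot a (lincomb a b (s, t)))). lra. }
  assert (big : forall x, (Rabs r + 1) / D <= x -> (x * pdet a b) ^ 2 > r ^ 2).
  { intros x Hx.
    assert (Hx' : Rabs r + 1 <= x * D)
      by (replace (Rabs r + 1) with ((Rabs r + 1) / D * D) by (field; lra);
          apply Rmult_le_compat_r; lra).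
    rewrite <- (pow2_abs r), <- (pow2_abs (x * pdet a b)), Rabs_mult.
    fold D. pose proof (Rabs_pos r). rewrite (Rabs_right x) by nra. nra. }
  destruct Hst as [Hs'|Ht']; [specialize (big s Hs')|specialize (big t Ht')]; lra.
Qed.

Section SupportedFunction.

Variables (g : pt -> R) (K : R).
Hypothesis g_lip : forall p, lipschitz_at g p.
Hypothesis g_supp : forall s t, K <= s \/ K <= t -> g (lincomb a b (s, t)) = 0.

Lemma ray_int_lincomb_l (s t : R) :
  ray_int g (lincomb a b (s, t)) a = RInt (fun x => g (lincomb a b (x, t))) s K.
Proof.
  apply RInt_gen_shift_support.
  - intros x. apply (lipschitz_continuity_pt_l (fun q => g (lincomb a b q))).
    intros q. now apply lipschitz_at_comp_lincomb.
  - intros x Hx. apply g_supp. now left.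
  - intros tau. f_equal. unfold lincomb. pt_ring.
Qed.

Lemma ray_int_lincomb_r (s t : R) :
  ray_int g (lincomb a b (s, t)) b = RInt (fun y => g (lincomb a b (s, y))) t K.
Proof.
  apply RInt_gen_shift_support.
  - intros y. apply (lipschitz_continuity_pt_r (fun q => g (lincomb a b q))).
    intros q. now apply lipschitz_at_comp_lincomb.
  - intros y Hy. apply g_supp. now right.
  - intros tau. f_equal. unfold lincomb. pt_ring.
Qed.

End SupportedFunction.

Lemma Valpha_sub_lincomb (alpha : R) (u v : pt -> pt) (g1 g2 : pt -> R) (K s t : R) :
  (forall x, u x = a) -> (forall x, v x = b) ->
  (forall p, lipschitz_at g1 p) -> (forall p, lipschitz_at g2 p) ->
  (forall s t, K <= s \/ K <= t -> g1 (lincomb a b (s, t)) = 0) ->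
  (forall s t, K <= s \/ K <= t -> g2 (lincomb a b (s, t)) = 0) ->
  Valpha alpha u v g1 (lincomb a b (s, t)) - Valpha alpha u v g2 (lincomb a b (s, t)) =
  RInt (fun x => g1 (lincomb a b (x, t)) - g2 (lincomb a b (x, t))) s K +
  alpha * RInt (fun y => g1 (lincomb a b (s, y)) - g2 (lincomb a b (s, y))) t K.
Proof.
  intros Hu Hv L1 L2 S1 S2. unfold Valpha. rewrite !Hu, !Hv.
  rewrite !(ray_int_lincomb_l _ K), !(ray_int_lincomb_r _ K) by assumption.
  assert (L : forall g, (forall p, lipschitz_at g p) ->
              forall q, lipschitz_at (fun q => g (lincomb a b q)) q)
    by (intros; now apply lipschitz_at_comp_lincomb).
  pose proof (lipschitz_continuity_pt_l _ t (L g1 L1)).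
  pose proof (lipschitz_continuity_pt_l _ t (L g2 L2)).
  pose proof (lipschitz_continuity_pt_r _ s (L g1 L1)).
  pose proof (lipschitz_continuity_pt_r _ s (L g2 L2)).
  rewrite !RInt_minus_R by (apply ex_RInt_continuity; assumption).
  ring.
Qed.

End UnitCoordinates.

Lemma standing_field_constant (w : pt -> pt) (x : pt) :
  C1_field w -> (forall x, pnorm2 (w x) = 1) -> straight_field w -> w x = w (0, 0).
Proof.
  intros [C1w C2w] Hunit Hstraight.
  apply straight_unit_field_constant; auto; intros p; now apply C1_lipschitz_at.
Qed.

Theorem theorem6p1 (alpha : R) (u v : pt -> pt) (h1 h2 : pt -> R) :
  standing_assumptions u v ->
  Cc1_disc h1 -> Cc1_disc h2 ->
  (forall x : pt, Valpha alpha u v h1 x = Valpha alpha u v h2 x) ->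
  forall p : pt, h1 p = h2 p.
Proof.
  intros [Cu [Cv [Uu [Uv [Hdet [Su Sv]]]]]] [Ch1 [r1 [Hr1 Z1]]] [Ch2 [r2 [Hr2 Z2]]] HV p.
  set (a := u (0, 0)). set (b := v (0, 0)).
  assert (Ha : forall x, u x = a) by (intros; now apply standing_field_constant).
  assert (Hb : forall x, v x = b) by (intros; now apply standing_field_constant).
  destruct (lincomb_far_outside a b (Uu _) (Uv _) (Hdet _) (Rmax r1 r2)) as [K HK].
  assert (supp : forall h r, (forall q, pnorm2 q > r ^ 2 -> h q = 0) -> 0 <= r <= Rmax r1 r2 ->
            forall s t, K <= s \/ K <= t -> h (lincomb a b (s, t)) = 0).
  { intros h r Zh Hr s t Hst. apply Zh. specialize (HK s t Hst). nra. }
  pose proof (supp h1 r1 Z1 (conj (proj1 Hr1) (Rmax_l r1 r2))) as S1.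
  pose proof (supp h2 r2 Z2 (conj (proj1 Hr2) (Rmax_r r1 r2))) as S2.
  assert (L : forall h, Defs.C1 h -> forall q, lipschitz_at (fun q => h (lincomb a b q)) q)
    by (intros; apply lipschitz_at_comp_lincomb, C1_lipschitz_at; assumption).
  set (H := fun q => h1 (lincomb a b q) - h2 (lincomb a b q)).
  assert (transport : forall s t,
            RInt (fun x => H (x, t)) s K + alpha * RInt (fun y => H (s, y)) t K = 0).
  { intros s t. unfold H.
    rewrite <- (Valpha_sub_lincomb a b alpha u v h1 h2 K s t), HV by auto using C1_lipschitz_at.
    ring. }
  destruct (lincomb_surjective a b (Hdet _) p) as [[s t] <-].
  assert (H_lip : forall q, lipschitz_at H q)
    by (intros q; apply lipschitz_at_minus; now apply L).
  pose proof (transport_solution_eq0 H K alpha H_lip transport s t).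
  unfold H in *; lra.
Qed.
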